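(* The occupancy problem under the step transformation, with all tiles of size $1\times 1$, is solvable in polynomial time, regardless of which subset of the directions $\{N,E,S,W\}$ is permitted for steps. In particular, it is solvable in $O(|B|)$ time, where $|B|$ is the number of positions of the input board $B$.
   Context: A board is an $m\times n$ rectangular region of the square lattice, formally a partition $B=(O,W)$ of $\{(x,y): x\in\{1,\dots,m\}, y\in\{1,\dots,n\}\}$ into open locations $O$ and blocked locations $W$. A tile is a labeled unit square centered on an open location. A configuration $C=(B,P)$ consists of a board $B$ and a set $P$ of tiles, no two at the same location and none at a blocked location. A step in direction $d\in\{N,E,S,W\}$ transforms a configuration as follows: consider translating every tile by one unit in direction $d$; every tile whose translation would land on a blocked location is temporarily added to the blocked set, and this is repeated until no remaining tile's translation lands on a blocked location; then all remaining (non-blocked) tiles are translated by one unit in direction $d$ (if all tiles become blocked, the configuration is unchanged). $C\rightarrow_1 C'$ means one step (in a permitted direction) turns $C$ into $C'$, and $\rightarrow_*$ is the reflexive–transitive closure. The occupancy problem: given a configuration $C=(B,P)$ and a location $e$ of $B$, does there exist $C'=(B,P')$ with $C\rightarrow_* C'$ such that some tile of $P'$ is at location $e$? *)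

From mathcomp Require Import all_boot.
Set Implicit Arguments. Unset Strict Implicit. Unset Printing Implicit Defensive.

(* Locations are pairs (x, y) of naturals; the m x n board consists of  *)
(* the locations with 1 <= x <= m and 1 <= y <= n.  A board is given by *)
(* m, n and a predicate [op] of open locations (only its values on the  *)
(* board matter).  A configuration (set of 1x1 tiles) is given by the   *)
(* predicate [C] of occupied locations; tile labels play no role in the *)
(* step dynamics or in the occupancy question, so the set of occupied   *)
(* locations determines everything relevant.                            *)

Definition in_board (m n x y : nat) : bool :=
  (1 <= x <= m) && (1 <= y <= n).

Definition is_open (m n : nat) (op : nat -> nat -> bool) (x y : nat) : bool :=
  in_board m n x y && op x y.

Definition valid_config (m n : nat) (op C : nat -> nat -> bool) : Prop :=
  forall x y, C x y -> is_open m n op x y.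

Inductive dir := N | E | S | W.

(* translation by one unit; N = +y, S = -y, E = +x, W = -x.  Moving      *)
(* below coordinate 1 gives coordinate 0, which is off the board.       *)
Definition shift (d : dir) (x y : nat) : nat * nat :=
  match d with
  | N => (x, y.+1)
  | S => (x, y.-1)
  | E => (x.+1, y)
  | W => (x.-1, y)
  end.

Definition opp (d : dir) : dir :=
  match d with N => S | S => N | E => W | W => E end.

(* k rounds of the "temporarily blocked" iteration: a tile becomes      *)
(* stuck if its translation lands on a blocked location or on a tile    *)
(* that is already stuck.                                               *)
Fixpoint stuck (m n : nat) (op C : nat -> nat -> bool) (d : dir) (k : nat)
  (x y : nat) : bool :=
  match k with
  | 0 => false
  | k'.+1 =>
      C x y &&
      (let: (x', y') := shift d x y in
       ~~ is_open m n op x' y' || stuck m n op C d k' x' y')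
  end.

(* the iteration is monotone and stabilises after at most (#tiles) <=   *)
(* m*n rounds, so m*n+1 rounds compute the final stuck set              *)
Definition stuckF (m n : nat) (op C : nat -> nat -> bool) (d : dir)
  (x y : nat) : bool :=
  stuck m n op C d (m * n).+1 x y.

Definition step (m n : nat) (op : nat -> nat -> bool) (d : dir)
  (C : nat -> nat -> bool) : nat -> nat -> bool :=
  fun x y =>
    (C x y && stuckF m n op C d x y) ||
    (in_board m n x y &&
     let: (x0, y0) := shift (opp d) x y in
     C x0 y0 && ~~ stuckF m n op C d x0 y0).

Inductive reach (m n : nat) (op : nat -> nat -> bool) (D : dir -> bool)
  (C : nat -> nat -> bool) : (nat -> nat -> bool) -> Prop :=
  | reach_refl : reach m n op D C C
  | reach_step : forall C' d, reach m n op D C C' -> D d ->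
                 reach m n op D C (step m n op d C').

Definition occupiable (m n : nat) (op : nat -> nat -> bool) (D : dir -> bool)
  (C : nat -> nat -> bool) (ex ey : nat) : Prop :=
  exists C', reach m n op D C C' /\ C' ex ey.

(* Cost model: a unit-cost random access machine (additions and         *)
(* truncated subtractions only, indirect addressing).                  *)
Inductive instr :=
  | IConst (r k : nat)
  | IAdd (r a b : nat)
  | ISub (r a b : nat)
  | ILoad (r a : nat)
  | IStore (a r : nat)
  | IJz (r l : nat)
  | IJmp (l : nat)
  | IHalt.

Record state := State { pc : nat; regs : nat -> nat; mem : nat -> nat }.

Definition upd (f : nat -> nat) (i v : nat) : nat -> nat :=
  fun j => if j == i then v else f j.

(* instructions are fetched with [nth IHalt]: pc out of range = halt *)
Definition fetch (prog : seq instr) (s : state) : instr := nth IHalt prog (pc s).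

Definition step1 (prog : seq instr) (s : state) : option state :=
  let: State p R M := s in
  match fetch prog s with
  | IConst r k => Some (State p.+1 (upd R r k) M)
  | IAdd r a b => Some (State p.+1 (upd R r (R a + R b)) M)
  | ISub r a b => Some (State p.+1 (upd R r (R a - R b)) M)
  | ILoad r a => Some (State p.+1 (upd R r (M (R a))) M)
  | IStore a r => Some (State p.+1 R (upd M (R a) (R r)))
  | IJz r l => Some (State (if R r == 0 then l else p.+1) R M)
  | IJmp l => Some (State l R M)
  | IHalt => None
  end.

Fixpoint run (prog : seq instr) (k : nat) (s : state) : state :=
  match k with
  | 0 => s
  | k'.+1 => match step1 prog s with
             | Some s' => run prog k' s'
             | None => s
             end
  end.

Definition halted (prog : seq instr) (s : state) : bool :=
  if fetch prog s is IHalt then true else false.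

Definition halts_within (prog : seq instr) (t : nat) (M0 : nat -> nat)
  (o : nat) : Prop :=
  exists k, k <= t /\
    let s := run prog k (State 0 (fun _ => 0) M0) in
    halted prog s /\ regs s 0 = o.

(* Input encoding: M[0] = m, M[1] = n, M[2] = x_e, M[3] = y_e, and for   *)
(* the board location (x, y) the cell 4 + (x-1)*n + (y-1) holds         *)
(* 0 (blocked), 1 (open, empty) or 2 (open, occupied by a tile);        *)
(* all other cells hold 0.                                              *)
Definition cell_code (m n : nat) (op C : nat -> nat -> bool) (x y : nat) : nat :=
  if ~~ is_open m n op x y then 0 else if C x y then 2 else 1.

Definition input_mem (m n : nat) (op C : nat -> nat -> bool) (ex ey : nat)
  : nat -> nat :=
  fun a =>
    if a == 0 then m else
    if a == 1 then n else
    if a == 2 then ex else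
    if a == 3 then ey else
    if (4 <= a) && (a < 4 + m * n) then
      cell_code m n op C ((a - 4) %/ n).+1 ((a - 4) %% n).+1
    else 0.

From Pilot Require Import Defs.
From mathcomp Require Import all_boot zify.
Set Implicit Arguments. Unset Strict Implicit. Unset Printing Implicit Defensive.

(* A tile can be brought to e iff some tile sits at a location t from which e
   is reached by a walk through open locations, each move going in a permitted
   direction.  Necessity: a location occupied after a step was occupied before
   or is entered from an open neighbour.  Sufficiency: follow the walk with the
   tile at t, and whenever the next location is already occupied continue with
   the tile sitting there; a tile whose target is open and empty is never stuck.
   The walk condition is decided by a depth-first search backwards from e over
   the open empty locations, stopping at the first occupied one.  On a unit-cost
   RAM the search marks visited cells in the input memory itself and keeps its
   stack above the board, so every location is pushed at most once and costs a
   bounded number of instructions: the running time is O(m n). *)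

(** * Occupancy as reachability along walks *)

Definition shiftp (d : dir) (p : nat * nat) : nat * nat := shift d p.1 p.2.
Definition back (d : dir) (p : nat * nat) : nat * nat := shiftp (opp d) p.
Definition openp m n op (p : nat * nat) : bool := is_open m n op p.1 p.2.

Section Walks.
Variables (m n : nat) (op : nat -> nat -> bool) (D : dir -> bool).

Inductive walk : nat * nat -> nat * nat -> Prop :=
| walk_refl p : walk p p
| walk_step p d q : D d -> openp m n op (shiftp d p) -> walk (shiftp d p) q -> walk p q.

Lemma walk_rcons p q d :
  walk p q -> D d -> openp m n op (shiftp d q) -> walk p (shiftp d q).
Proof.
elim=> [r|r d' r' Dd' open_r _ IH] Dd open_q; first exact: walk_step (walk_refl _).
exact: walk_step Dd' open_r (IH Dd open_q).
Qed.

Lemma walk_end p q : walk p q -> p = q \/ openp m n op q.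
Proof. by elim=> [r|r d r' _ open_r _ [<-|]]; [left | right | right]. Qed.

Lemma opp_shiftK d p : openp m n op (shiftp d p) -> shiftp (opp d) (shiftp d p) = p.
Proof.
case: p => x y; rewrite /openp /is_open /in_board.
case/andP=> /andP[/andP[x1 xm] /andP[y1 yn]] _.
by case: d x1 xm y1 yn => /= *; congr pair; lia.
Qed.

Lemma shift_oppK d q : in_board m n q.1 q.2 -> shiftp d (shiftp (opp d) q) = q.
Proof.
case: q => x y; rewrite /in_board => /andP[/andP[? _] /andP[? _]].
by case: d => /=; rewrite ?prednK.
Qed.

Lemma reach_trans C1 C2 C3 :
  reach m n op D C1 C2 -> reach m n op D C2 C3 -> reach m n op D C1 C3.
Proof. by move=> R12; elim=> [|C' d _ R13 Dd] //; apply: reach_step R13 Dd. Qed.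

Lemma stuck_empty C d k x y : ~~ C x y -> stuck m n op C d k x y = false.
Proof. by case: k => //= k /negbTE ->. Qed.

Lemma step_source d C x y : step m n op d C x y ->
  C x y \/ exists2 p, C p.1 p.2 & openp m n op (shiftp d p) /\ shiftp d p = (x, y).
Proof.
rewrite /step /stuckF => /orP[/andP[Cxy _]|/andP[in_xy]]; first by left.
move: (@shift_oppK d (x, y) in_xy); rewrite /shiftp /=.
case: (shift (opp d) x y) => x0 y0 /= back_xy /andP[C0 not_stuck].
right; exists (x0, y0) => //=; split => //; rewrite back_xy /openp /=.
by move: not_stuck; rewrite /= C0 back_xy negb_or negbK => /andP[].
Qed.

Lemma step_into_empty d (C : nat -> nat -> bool) p : C p.1 p.2 -> openp m n op (shiftp d p) ->
  ~~ C (shiftp d p).1 (shiftp d p).2 -> step m n op d C (shiftp d p).1 (shiftp d p).2.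
Proof.
case: p => x y /= Cxy; rewrite /openp /shiftp /step /stuckF /=.
have := @opp_shiftK d (x, y); rewrite /openp /shiftp /=.
case shift_xy: (shift d x y) => [x' y'] /= back open' empty'.
rewrite (negbTE empty') /= back //; move: open' => /[dup] /andP[-> _] open' /=.
by rewrite Cxy /= shift_xy open' /= stuck_empty.
Qed.

Lemma reach_walk C C' : reach m n op D C C' ->
  forall x y, C' x y -> exists2 t, C t.1 t.2 & walk t (x, y).
Proof.
elim=> [|C2 d _ IH Dd] x y; first by exists (x, y) => //; apply: walk_refl.
case/step_source=> [/IH //|[p C2p [open_p <-]]].
have [t Ct walk_tp] := IH _ _ C2p.
rewrite -surjective_pairing in walk_tp.
by exists t => //; apply: walk_rcons.
Qed.

Lemma walk_occupiable p e (C : nat -> nat -> bool) :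
  walk p e -> C p.1 p.2 -> occupiable m n op D C e.1 e.2.
Proof.
move=> walk_pe; elim: walk_pe C => [r|r d r' Dd open_r _ IH] C Cr.
  by exists C; split => //; apply: reach_refl.
case: (boolP (C (shiftp d r).1 (shiftp d r).2)) => [/IH //|empty_r].
have [C' [reach_C' C'e]] := IH _ (step_into_empty Cr open_r empty_r).
exists C'; split => //; apply: reach_trans reach_C'.
exact: reach_step (reach_refl _ _ _ _ _) Dd.
Qed.

Lemma occupiable_walkP C ex ey :
  occupiable m n op D C ex ey <-> exists2 t, C t.1 t.2 & walk t (ex, ey).
Proof.
split=> [[C' [reach_C' C'e]]|[t Ct walk_te]]; first exact: reach_walk reach_C' _ _ C'e.
exact: walk_occupiable walk_te Ct.
Qed.

End Walks.

Arguments upd f i v j /.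

(** * Running time bounds for the RAM *)

Section Run.
Variable prog : seq instr.

Lemma run_halted k s : step1 prog s = None -> run prog k s = s.
Proof. by case: k => //= k ->. Qed.

Lemma runD k1 k2 s : run prog (k1 + k2) s = run prog k2 (run prog k1 s).
Proof.
elim: k1 s => [|k1 IH] s //=.
by case E: (step1 prog s) => [s'|] //; rewrite run_halted.
Qed.

Definition within (K : nat) (s : state) (P : state -> Prop) :=
  exists2 k, k <= K & P (run prog k s).

Lemma within_done K s (P : state -> Prop) : P s -> within K s P.
Proof. by exists 0. Qed.

Lemma within_step K s s' (P : state -> Prop) :
  step1 prog s = Some s' -> within K s' P -> within K.+1 s P.
Proof. by move=> step_s [k le_kK Pk]; exists k.+1 => //=; rewrite step_s. Qed.

Lemma within_seq K1 K2 s (P Q : state -> Prop) : within K1 s P ->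
  (forall s', P s' -> within K2 s' Q) -> within (K1 + K2) s Q.
Proof.
move=> [k1 le_k1 P1] PQ; have [k2 le_k2 Q2] := PQ _ P1.
by exists (k1 + k2); [lia | rewrite runD].
Qed.

Lemma within_le K1 K2 s (P : state -> Prop) : K1 <= K2 -> within K1 s P -> within K2 s P.
Proof. by move=> le_K [k le_k Pk]; exists k => //; lia. Qed.

Lemma within_mono K s (P Q : state -> Prop) :
  (forall s, P s -> Q s) -> within K s P -> within K s Q.
Proof. by move=> PQ [k le_k Pk]; exists k => //; apply: PQ. Qed.

Lemma countdown_loop L r i R M :
  nth IHalt prog L = IJz 12 (L + 4) -> nth IHalt prog L.+1 = IAdd r r 1 ->
  nth IHalt prog L.+2 = ISub 12 12 10 -> nth IHalt prog L.+3 = IJmp L ->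
  r != 1 -> r != 10 -> r != 12 -> R 12 = i -> R 10 = 1 ->
  within (4 * i + 1) (State L R M) (fun s => [/\ pc s = L + 4, Defs.mem s = M,
     regs s r = R r + i * R 1 & forall k, k != r -> k != 12 -> regs s k = R k]).
Proof.
move=> I0 I1 I2 I3 /negbTE r1 /negbTE r10 /negbTE r12.
have [r1' r10' r12'] : [/\ (1 == r) = false, (10 == r) = false & (12 == r) = false].
  by rewrite ![_ == r]eq_sym.
elim: i R => [|i IH] R R12 R10.
  apply: within_step (within_done _ _); first by rewrite /= /fetch /= I0 R12.
  by split=> //=; rewrite addn0.
apply: (@within_le (4 * i + 1).+4); first lia.
apply: within_step; first by rewrite /= /fetch /= I0 R12.
apply: within_step; first by rewrite /= /fetch /= I1.
apply: within_step; first by rewrite /= /fetch /= I2.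
apply: within_step; first by rewrite /= /fetch /= I3.
apply: within_mono (IH _ _ _) => [s [-> -> Rr Rk]||] /=.
- split=> //; first by rewrite Rr /= r12 eqxx r1' mulSn; lia.
  by move=> k kr k12; rewrite Rk //= (negbTE kr) (negbTE k12).
- by rewrite /= r12' r10' R12 R10 subn1.
- by rewrite /= r10' R10.
Qed.

End Run.

(** * Layout of the board in memory *)

Section Layout.
Variables (m n : nat).

Definition top := 4 + m * n.
Definition addr (p : nat * nat) := 4 + (p.1 - 1) * n + (p.2 - 1).
Definition inb (p : nat * nat) := in_board m n p.1 p.2.

Lemma inbP p : inb p -> [/\ 1 <= p.1, p.1 <= m, 1 <= p.2 & p.2 <= n].
Proof. by rewrite /inb /in_board => /andP[/andP[? ?] /andP[? ?]]; split. Qed.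

Lemma open_inb op p : openp m n op p -> inb p.
Proof. by rewrite /openp /is_open => /andP[]. Qed.

Lemma addr_bounds p : inb p -> 4 <= addr p < top.
Proof.
case/inbP => x1 xm y1 yn; rewrite /addr /top.
have: (p.1 - 1) * n + n <= m * n.
  by rewrite -[X in _ + X]mul1n -mulnDl leq_mul2r; apply/orP; right; lia.
move: ((p.1 - 1) * n) => X; lia.
Qed.

Lemma addr_div p : inb p -> (addr p - 4) %/ n = p.1 - 1 /\ (addr p - 4) %% n = p.2 - 1.
Proof.
case/inbP => x1 xm y1 yn; rewrite /addr.
have -> : 4 + (p.1 - 1) * n + (p.2 - 1) - 4 = (p.1 - 1) * n + (p.2 - 1).
  by rewrite -addnA addKn.
rewrite divnMDl ?modnMDl ?divn_small ?modn_small; lia.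
Qed.

Lemma addr_inj p q : inb p -> inb q -> addr p = addr q -> p = q.
Proof.
case: p => x y; case: q => x' y' in_p in_q eq_addr.
have [div_p mod_p] := addr_div in_p; have [div_q mod_q] := addr_div in_q.
move: div_p mod_p; rewrite eq_addr div_q mod_q /= => eq_x eq_y.
case/inbP: in_p => /= ????; case/inbP: in_q => /= ????.
by congr pair; lia.
Qed.

Lemma mem_map_addr V q : {in V, forall p, inb p} -> inb q ->
  (addr q \in map addr V) = (q \in V).
Proof.
move=> inb_V in_q; apply/mapP/idP => [[p Vp eq_addr]|Vq]; last by exists q.
by rewrite (addr_inj in_q (inb_V _ Vp) eq_addr).
Qed.

Lemma uniq_board_size V : uniq V -> {in V, forall p, inb p} -> size V <= m * n.
Proof.
move=> uniq_V inb_V.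
have uniq_addr : uniq (map addr V).
  by rewrite map_inj_in_uniq // => p q Vp Vq; apply: addr_inj; apply: inb_V.
have := uniq_leq_size uniq_addr (s2 := iota 4 (m * n)).
rewrite size_map size_iota; apply => a /mapP[p Vp ->].
by rewrite mem_iota; have := addr_bounds (inb_V _ Vp); rewrite /top; lia.
Qed.

Lemma input_mem_addr op C ex ey p :
  inb p -> input_mem m n op C ex ey (addr p) = cell_code m n op C p.1 p.2.
Proof.
move=> in_p; have [div_p mod_p] := addr_div in_p.
have /andP[addr_ge4 addr_lt] := addr_bounds in_p.
rewrite /input_mem.
have -> : (addr p == 0) = false by apply/eqP; lia.
have -> : (addr p == 1) = false by apply/eqP; lia.
have -> : (addr p == 2) = false by apply/eqP; lia.
have -> : (addr p == 3) = false by apply/eqP; lia.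
rewrite addr_ge4 /=; move: addr_lt; rewrite /top => -> /=.
rewrite div_p mod_p; case/inbP: in_p => ????.
by rewrite !subn1 !prednK.
Qed.

(* The four boundary tests are the ones the program computes with additions and
   truncated subtractions only. *)
Lemma back_N op p : inb p -> if p.2 - 1 == 0 then is_true (~~ openp m n op (back N p))
                      else inb (back N p) /\ addr (back N p) = addr p - 1.
Proof.
case: p => x y /inbP /= [x1 xm y1 yn]; rewrite /back /shiftp /= -?subn1.
case: ifP => [/eqnP Hy|/negbT/eqnP Hy].
- by apply/negP => /open_inb /inbP /= [_ _ ? _]; lia.
- split; first by rewrite /inb /in_board /=; lia.
  rewrite /addr /=; move: ((x - 1) * n) => Z; lia.
Qed.

Lemma back_S op p : inb p -> if n - p.2 == 0 then is_true (~~ openp m n op (back S p))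
                      else inb (back S p) /\ addr (back S p) = addr p + 1.
Proof.
case: p => x y /inbP /= [x1 xm y1 yn]; rewrite /back /shiftp /= -?subn1.
case: ifP => [/eqnP Hy|/negbT/eqnP Hy].
- by apply/negP => /open_inb /inbP /= [_ _ _ ?]; lia.
- split; first by rewrite /inb /in_board /=; lia.
  rewrite /addr /=; move: ((x - 1) * n) => Z; lia.
Qed.

Lemma back_E op p : inb p -> if addr p - (3 + n) == 0 then is_true (~~ openp m n op (back E p))
                      else inb (back E p) /\ addr (back E p) = addr p - n.
Proof.
case: p => x y /inbP /= [x1 xm y1 yn]; rewrite /back /shiftp /addr /= -?subn1.
case: x x1 xm => [|[|X]] x1 xm //.
- rewrite subnn mul0n.
  have -> : 4 + 0 + (y - 1) - (3 + n) = 0 by lia.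
  by rewrite eqxx; apply/negP => /open_inb /inbP /= [? _ _ _].
- have -> : X.+2 - 1 = X.+1 by lia.
  rewrite mulSn.
  have -> : (4 + (n + X * n) + (y - 1) - (3 + n) == 0) = false.
    by apply/eqnP; move: (X * n) => Z; lia.
  split; first by rewrite /inb /in_board /=; lia.
  rewrite /addr /=.
  have -> : X.+2 - 1 - 1 = X by lia.
  move: (X * n) => Z; lia.
Qed.

Lemma back_W op p : inb p -> if top - (addr p + n) == 0 then is_true (~~ openp m n op (back W p))
                      else inb (back W p) /\ addr (back W p) = addr p + n.
Proof.
case: p => x y /inbP /= [x1 xm y1 yn]; rewrite /back /shiftp /addr /top /= -?subn1.
case: (ltnP x m) => Hx.
- have Hm : x.+1 * n <= m * n by rewrite leq_mul2r Hx orbT.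
  have Ex : (x - 1) * n + n = x * n.
    by rewrite -{2}(subnK x1) mulnDl mul1n.
  have -> : (4 + m * n - (4 + (x - 1) * n + (y - 1) + n) == 0) = false.
    apply/eqnP; move: Hm Ex; rewrite mulSn.
    move: ((x - 1) * n) (x * n) (m * n) => A B Cc; lia.
  split; first by rewrite /inb /in_board /=; lia.
  rewrite /addr /=.
  have -> : x.+1 - 1 = x by lia.
  move: Ex; move: ((x - 1) * n) (x * n) => A B; lia.
- have Exm : x = m by lia.
  subst x.
  have Ex : (m - 1) * n + n = m * n.
    by rewrite -{2}(subnK x1) mulnDl mul1n.
  have -> : (4 + m * n - (4 + (m - 1) * n + (y - 1) + n) == 0) = true.
    apply/eqnP; move: Ex; move: ((m - 1) * n) (m * n) => A B; lia.
  by apply/negP => /open_inb /inbP /= [_ ? _ _]; lia.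
Qed.

End Layout.

(** * The search program *)

(* Registers: 1 = n, 2 = top, 3 = stack pointer, 4 and 5 = address and
   y-coordinate of the current cell, 6 and 7 = the same for its neighbour,
   8 and 9 = scratch, 10 = 1, 11 = 2, 12 = loop counter, 13 = 3 + n,
   14 = 3 (the mark of a visited cell), 15 = 0.  The stack holds pairs
   (address, y-coordinate) from address top upwards; the y-coordinate is kept
   because the machine cannot divide. *)

(* Examine the neighbour in registers 6 and 7: skip it (goto endl) if it is
   blocked or visited, accept (goto 117) if it holds a tile, otherwise mark and
   push it. *)
Definition visit (mark endl : nat) : seq instr :=
  [:: ILoad 9 6; IJz 9 endl; ISub 8 9 10; IJz 8 mark; ISub 8 9 11; IJz 8 117;
      IJmp endl; IStore 6 14; IStore 3 6; IAdd 3 3 10; IStore 3 7; IAdd 3 3 10].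

Definition prog (D : dir -> bool) : seq instr :=
  [:: IConst 8 1; ILoad 1 8; IConst 8 0; ILoad 12 8; IConst 2 4; IConst 10 1; IConst 15 0;
      IJz 12 11; IAdd 2 2 1; ISub 12 12 10; IJmp 7;
      IConst 8 2; ILoad 12 8; ISub 12 12 10; IConst 8 3; ILoad 5 8; IConst 4 3; IAdd 4 4 5;
      IJz 12 22; IAdd 4 4 1; ISub 12 12 10; IJmp 18;
      IConst 14 3; IAdd 13 14 1; IAdd 3 2 15; IConst 11 2;
      ILoad 9 4; IJz 9 115; ISub 8 9 10; IJz 8 31; IJmp 117;
      IStore 4 14; IStore 3 4; IAdd 3 3 10; IStore 3 5; IAdd 3 3 10;
      ISub 8 3 2; IJz 8 115; ISub 3 3 10; ILoad 5 3; ISub 3 3 10; ILoad 4 3;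
      IConst 8 (nat_of_bool (D N)); IJz 8 60; ISub 8 5 10; IJz 8 60; ISub 6 4 10; ISub 7 5 10] ++
  visit 55 60 ++
  [:: IConst 8 (nat_of_bool (D S)); IJz 8 78; ISub 8 1 5; IJz 8 78; IAdd 6 4 10; IAdd 7 5 10] ++
  visit 73 78 ++
  [:: IConst 8 (nat_of_bool (D E)); IJz 8 96; ISub 8 4 13; IJz 8 96; ISub 6 4 1; IAdd 7 5 15] ++
  visit 91 96 ++
  [:: IConst 8 (nat_of_bool (D W)); IJz 8 114; IAdd 6 4 1; ISub 8 2 6; IJz 8 114; IAdd 7 5 15] ++
  visit 109 114 ++
  [:: IJmp 36; IConst 0 0; IHalt; IConst 0 1; IHalt].

(* Entry points: 26 examines e, 36 pops the stack, 42/60/78/96 examine the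
   neighbours from which a move N/S/E/W leads to the current cell, 115 rejects
   and 117 accepts. *)
Section Main.
Variables (D : dir -> bool) (m n : nat) (op C : nat -> nat -> bool) (ex ey : nat).
Hypothesis valid_C : valid_config m n op C.
Hypothesis in_target : in_board m n ex ey.

Local Notation top := (top m n).
Local Notation addr := (addr n).
Local Notation inb := (inb m n).
Local Notation walk := (walk m n op D).
Local Notation openp := (openp m n op).
Local Notation P := (prog D).

Definition target := (ex, ey).
Definition M0 := input_mem m n op C ex ey.
Definition code (p : nat * nat) := cell_code m n op C p.1 p.2.

Lemma n_pos : 0 < n.
Proof. by move: in_target; rewrite /in_board; lia. Qed.

Lemma m_pos : 0 < m.
Proof. by move: in_target; rewrite /in_board; lia. Qed.

(* V is the list of visited cells and stk the stack, bottom first. *)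
Definition mem_ok (V stk : seq (nat * nat)) (M : nat -> nat) :=
  (forall a, a < top -> M a = if a \in map addr V then 3 else M0 a) /\
  (forall i, i < size stk -> M (top + 2 * i) = addr (nth (0,0) stk i) /\
                            M (top + 2 * i).+1 = (nth (0,0) stk i).2).

Definition search_inv (V stk : seq (nat * nat)) :=
  [/\ uniq V, (forall p, p \in V -> [/\ inb p, code p = 1 & walk p target]),
      {subset stk <= V} & target \in V].

Definition dir_index d := match d with N => 0 | S => 1 | E => 2 | W => 3 end.

(* Only the neighbours of cur in directions of index < j have been examined. *)
Definition closed_upto (V stk : seq (nat * nat)) cur j :=
  forall p d, p \in V -> p \notin stk -> D d ->
  (p = cur -> dir_index d < j) -> openp (back d p) -> back d p \in V.

Definition closed (V stk : seq (nat * nat)) :=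
  forall p d, p \in V -> p \notin stk -> D d -> openp (back d p) -> back d p \in V.

Definition const_regs (R : nat -> nat) :=
  [/\ R 1 = n, R 2 = top, R 10 = 1, R 11 = 2 & [/\ R 13 = 3 + n, R 14 = 3 & R 15 = 0]].

Definition found s := [/\ halted P s, regs s 0 = 1 & exists2 t, C t.1 t.2 & walk t target].

(* Both a push and a pop decrease it. *)
Definition potential (V stk : seq (nat * nat)) := 2 * (m * n - size V) + size stk.

Definition scan_state L (V stk : seq (nat * nat)) (cur : nat * nat) (j : nat) (s : state) :=
  [/\ pc s = L, const_regs (regs s), regs s 3 = top + 2 * size stk, regs s 4 = addr cur &
     [/\ regs s 5 = cur.2, mem_ok V stk (Defs.mem s), search_inv V stk, cur \in V
        & closed_upto V stk cur j]].

Definition scan_post L V stk cur j s' :=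
  found s' \/ exists V' stk', scan_state L V' stk' cur j s' /\ potential V' stk' <= potential V stk.

Lemma codeP p : [\/ code p = 0 /\ ~~ openp p,
                  code p = 1 /\ openp p /\ ~~ C p.1 p.2 |
                  code p = 2 /\ openp p /\ C p.1 p.2].
Proof.
rewrite /code /cell_code /openp.
case: (is_open m n op p.1 p.2) => /=; last by constructor 1.
by case: (C p.1 p.2); [constructor 3 | constructor 2].
Qed.

Lemma mem_cell V stk M q : mem_ok V stk M -> search_inv V stk -> inb q ->
  M (addr q) = if q \in V then 3 else code q.
Proof.
move=> [mem_board _] [_ inv_V _ _] in_q.
have /andP[_ lt_top] := addr_bounds in_q.
rewrite mem_board // (@mem_map_addr m) //; last by move=> p /inv_V [].
by case: (q \in V) => //; rewrite /M0 input_mem_addr.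
Qed.

Ltac skip_neq := case: ifP => [/eqP ?|_]; first lia.

Lemma push_mem V stk M q : mem_ok V stk M -> inb q ->
  mem_ok (q :: V) (rcons stk q)
   (upd (upd (upd M (addr q) 3) (top + 2 * size stk) (addr q)) (top + 2 * size stk + 1) q.2).
Proof.
move=> [mem_board mem_stk] in_q; have /andP[_ lt_top] := addr_bounds in_q; split.
- move=> a lt_a /=.
  have -> : (a == top + 2 * size stk + 1) = false by apply/eqP; lia.
  have -> : (a == top + 2 * size stk) = false by apply/eqP; lia.
  rewrite inE mem_board //; by case: (a == addr q).
- move=> i; rewrite size_rcons ltnS leq_eqVlt => /orP[/eqP ->|lt_i] /=.
  + rewrite nth_rcons ltnn !eqxx /=; split; first by skip_neq.
    by rewrite addn1 eqxx.
  + rewrite nth_rcons lt_i.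
    have [mem_i mem_i1] := mem_stk _ lt_i.
    by split; do 3 skip_neq.
Qed.

Lemma dir_index_inj d d' : dir_index d = dir_index d' -> d = d'.
Proof. by case: d; case: d'. Qed.

Lemma closed_upto_next V stk cur j d : closed_upto V stk cur j -> dir_index d = j ->
  (D d -> openp (back d cur) -> back d cur \in V) -> closed_upto V stk cur j.+1.
Proof.
move=> closed_j index_d closed_d p d' Vp stk_p Dd' index_lt open_back.
case: (boolP (p == cur)) => [/eqP p_cur|p_not_cur].
- have := index_lt p_cur; rewrite ltnS leq_eqVlt => /orP[/eqP index_eq|index_lt_j].
  + have d_eq : d' = d by apply: dir_index_inj; rewrite index_eq index_d.
    by subst; apply: closed_d.
  + by apply: closed_j => // _.
- by apply: closed_j => // p_cur; rewrite p_cur eqxx in p_not_cur.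
Qed.

Lemma closed_upto_push V stk cur j q :
  closed_upto V stk cur j -> closed_upto (q :: V) (rcons stk q) cur j.
Proof.
move=> closed_j p d; rewrite inE mem_rcons inE negb_or => /orP[/eqP->|Vp]; first by rewrite eqxx.
move=> /andP[_ stk_p] Dd index_lt open_back; by rewrite inE (closed_j p d) ?orbT.
Qed.

Lemma closed_upto_pop V stk p : closed V (rcons stk p) -> closed_upto V stk p 0.
Proof.
move=> closed_V p' d Vp' stk_p' Dd index_lt open_back.
case: (boolP (p' == p)) => [/eqP p'_p|p'_not_p]; first by have := index_lt p'_p.
apply: closed_V => //; by rewrite mem_rcons inE negb_or p'_not_p.
Qed.

Lemma closed_upto_all V stk cur : closed_upto V stk cur 4 -> closed V stk.
Proof. move=> closed_4 p d Vp stk_p Dd open_back; apply: closed_4 => // _; by case: (d). Qed.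

Lemma visited_open V stk cur : search_inv V stk -> cur \in V -> openp cur.
Proof.
move=> [_ inv_V _ _] /inv_V [_ code_cur _]; move: code_cur.
by case: (codeP cur) => [[->]|[_ []]|[->]].
Qed.

Lemma search_inv_push V stk cur q d :
  search_inv V stk -> cur \in V -> D d -> back d cur = q -> inb q ->
  q \notin V -> code q = 1 -> search_inv (q :: V) (rcons stk q).
Proof.
move=> [uniq_V inv_V stk_V Vt] Vcur Dd back_cur in_q Vq code_q; split.
- by rewrite /= Vq uniq_V.
- move=> p; rewrite inE => /orP[/eqP->|/inv_V //]; split => //.
  have inv_cur := inv_V _ Vcur; case: inv_cur => in_cur _ walk_cur.
  have shift_q : shiftp d q = cur by rewrite -back_cur /back; exact: (@shift_oppK m n).
  apply: (walk_step Dd); rewrite shift_q //; exact: (@visited_open V stk).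
- by move=> p; rewrite mem_rcons !inE => /orP[->|/stk_V ->]; rewrite ?orbT.
- by rewrite inE Vt orbT.
Qed.

Lemma potential_push V stk q : search_inv V stk -> inb q -> q \notin V ->
  potential (q :: V) (rcons stk q) <= potential V stk.
Proof.
move=> [uniq_V inv_V _ _] in_q Vq.
have : size (q :: V) <= m * n.
  apply: uniq_board_size; first by rewrite /= Vq uniq_V.
  by move=> p; rewrite inE => /orP[/eqP->|/inv_V[]].
rewrite /potential size_rcons /=; lia.
Qed.

Lemma mk_scan_state L V stk cur j s : pc s = L -> regs s 1 = n -> regs s 2 = top -> regs s 10 = 1 ->
  regs s 11 = 2 -> regs s 13 = 3 + n -> regs s 14 = 3 -> regs s 15 = 0 ->
  regs s 3 = top + 2 * size stk -> regs s 4 = addr cur -> regs s 5 = cur.2 ->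
  mem_ok V stk (Defs.mem s) -> search_inv V stk -> cur \in V -> closed_upto V stk cur j ->
  scan_state L V stk cur j s.
Proof. by move=> *; split => //; split. Qed.

Ltac rewrite_regs := repeat match goal with
 | H : ?R ?k = _ |- context [?R ?k] => is_var R; rewrite H
 | H : code ?q = _ |- context [code ?q] => rewrite H
 | H : M0 ?q = _ |- context [M0 ?q] => rewrite H
 | H : (?a == ?b) = _ |- context [?a == ?b] => rewrite H
 end.
Ltac exec := eapply within_step; [simpl; rewrite_regs; simpl; reflexivity|].

Lemma visit_ok b d V stk cur q s :
  [|| b == 48, b == 66, b == 84 | b == 102] ->
  pc s = b -> const_regs (regs s) -> regs s 3 = top + 2 * size stk -> regs s 4 = addr cur ->
  regs s 5 = cur.2 -> regs s 6 = addr q -> regs s 7 = q.2 -> inb q -> back d cur = q -> D d ->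
  mem_ok V stk (Defs.mem s) -> search_inv V stk -> cur \in V ->
  closed_upto V stk cur (dir_index d) ->
  within P 9 s (scan_post (b + 12) V stk cur (dir_index d).+1).
Proof.
move=> pc_b; case: s => p R M /= pc_s [R1 R2 R10 R11 [R13 R14 R15]] R3 R4 R5 R6 R7.
move=> in_q back_cur Dd mem_s inv_V Vcur closed_cur.
have mem_q := mem_cell mem_s inv_V in_q.
have in_cur : inb cur by case: inv_V => _ inv_p _ _; case: (inv_p _ Vcur).
have shift_q : shiftp d q = cur by rewrite -back_cur /back; exact: (@shift_oppK m n).
case: (boolP (q \in V)) => Vq.
- rewrite Vq in mem_q.
  case/or4P: pc_b => /eqP eq_b; subst p b; do 7 exec; apply: within_done; right; exists V, stk.
  1-4: split => //; apply: mk_scan_state => //; try (by simpl; rewrite_regs).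
  1-4: apply: closed_upto_next => //.
  1-4: by rewrite back_cur.
rewrite (negbTE Vq) in mem_q.
case: (codeP q) => [[code_q open_q]|[code_q [open_q Cq]]|[code_q [open_q Cq]]].
- case/or4P: pc_b => /eqP eq_b; subst p b; do 2 exec; apply: within_done; right; exists V, stk.
  1-4: split => //; apply: mk_scan_state => //; try (by simpl; rewrite_regs).
  1-4: apply: closed_upto_next => //.
  1-4: by rewrite back_cur (negbTE open_q).
- case/or4P: pc_b => /eqP eq_b; subst p b; do 9 exec; apply: within_done; right.
  1-4: exists (q :: V), (rcons stk q).
  1-4: split; last by apply: potential_push.
  1-4: apply: mk_scan_state => //; try (by simpl; rewrite_regs).
  1-20: first [ by rewrite /= size_rcons; lia
              | exact: push_mem
              | exact: (search_inv_push inv_V Vcur Dd back_cur in_q Vq code_q)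
              | by rewrite inE Vcur orbT
              | (apply: closed_upto_next;
                 [exact: closed_upto_push | done | by rewrite back_cur inE eqxx])].
- case/or4P: pc_b => /eqP eq_b; subst p b; do 7 exec; apply: within_done; left.
  1-4: split => //; exists q => //.
  1-4: apply: (walk_step Dd); rewrite shift_q; [exact: (visited_open inv_V Vcur)|].
  1-4: by case: inv_V => _ inv_p _ _; case: (inv_p _ Vcur).
Qed.

Ltac scan_unchanged := apply: within_done; right; eexists; eexists; split; last exact: leqnn;
  apply: mk_scan_state => //; try (by simpl; rewrite_regs).

Lemma scan_N_ok V stk cur s :
  scan_state 42 V stk cur 0 s -> within P 22 s (scan_post 60 V stk cur 1).
Proof.
case: s => p R M [/= -> [R1 R2 R10 R11 [R13 R14 R15]] R3 R4 [R5 mem_s inv_V Vcur closed_cur]].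
have in_cur : inb cur by case: inv_V => _ inv_p _ _; case: (inv_p _ Vcur).
case Dd: (D N).
- have := back_N op in_cur; case boundary: (cur.2 - 1 == 0) => back_cur.
  + do 4 exec; scan_unchanged; apply: (closed_upto_next (d := N)) => // _ open_back.
    by rewrite open_back in back_cur.
  + case: back_cur => in_q addr_q; do 6 exec.
    apply: within_le (visit_ok (b := 48) (d := N) (q := back N cur) _ _ _ _ _ _ _ _ _ _ _ _ _ _ _)
      => //.
    by rewrite /back /shiftp /= subn1.
- do 2 exec; scan_unchanged; apply: (closed_upto_next (d := N)) => //; by rewrite Dd.
Qed.

Lemma scan_S_ok V stk cur s :
  scan_state 60 V stk cur 1 s -> within P 22 s (scan_post 78 V stk cur 2).
Proof.
case: s => p R M [/= -> [R1 R2 R10 R11 [R13 R14 R15]] R3 R4 [R5 mem_s inv_V Vcur closed_cur]].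
have in_cur : inb cur by case: inv_V => _ inv_p _ _; case: (inv_p _ Vcur).
case Dd: (D S).
- have := back_S op in_cur; case boundary: (n - cur.2 == 0) => back_cur.
  + do 4 exec; scan_unchanged; apply: (closed_upto_next (d := S)) => // _ open_back.
    by rewrite open_back in back_cur.
  + case: back_cur => in_q addr_q; do 6 exec.
    apply: within_le (visit_ok (b := 66) (d := S) (q := back S cur) _ _ _ _ _ _ _ _ _ _ _ _ _ _ _)
      => //.
    by rewrite /back /shiftp /= addn1.
- do 2 exec; scan_unchanged; apply: (closed_upto_next (d := S)) => //; by rewrite Dd.
Qed.

Lemma scan_E_ok V stk cur s :
  scan_state 78 V stk cur 2 s -> within P 22 s (scan_post 96 V stk cur 3).
Proof.
case: s => p R M [/= -> [R1 R2 R10 R11 [R13 R14 R15]] R3 R4 [R5 mem_s inv_V Vcur closed_cur]].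
have in_cur : inb cur by case: inv_V => _ inv_p _ _; case: (inv_p _ Vcur).
case Dd: (D E).
- have := back_E op in_cur; case boundary: (addr cur - (3 + n) == 0) => back_cur.
  + do 4 exec; scan_unchanged; apply: (closed_upto_next (d := E)) => // _ open_back.
    by rewrite open_back in back_cur.
  + case: back_cur => in_q addr_q; do 6 exec.
    apply: within_le (visit_ok (b := 84) (d := E) (q := back E cur) _ _ _ _ _ _ _ _ _ _ _ _ _ _ _)
      => //.
    by rewrite /back /shiftp /= addn0.
- do 2 exec; scan_unchanged; apply: (closed_upto_next (d := E)) => //; by rewrite Dd.
Qed.

Lemma scan_W_ok V stk cur s :
  scan_state 96 V stk cur 3 s -> within P 22 s (scan_post 114 V stk cur 4).
Proof.
case: s => p R M [/= -> [R1 R2 R10 R11 [R13 R14 R15]] R3 R4 [R5 mem_s inv_V Vcur closed_cur]].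
have in_cur : inb cur by case: inv_V => _ inv_p _ _; case: (inv_p _ Vcur).
case Dd: (D W).
- have := back_W op in_cur; case boundary: (top - (addr cur + n) == 0) => back_cur.
  + do 5 exec; scan_unchanged; apply: (closed_upto_next (d := W)) => // _ open_back.
    by rewrite open_back in back_cur.
  + case: back_cur => in_q addr_q; do 6 exec.
    apply: within_le (visit_ok (b := 102) (d := W) (q := back W cur) _ _ _ _ _ _ _ _ _ _ _ _ _ _ _)
      => //.
    by rewrite /back /shiftp /= addn0.
- do 2 exec; scan_unchanged; apply: (closed_upto_next (d := W)) => //; by rewrite Dd.
Qed.


Lemma scan_post_seq K1 K2 L1 L2 j1 j2 V stk cur s :
  within P K1 s (scan_post L1 V stk cur j1) ->
  (forall V' stk' s', scan_state L1 V' stk' cur j1 s' ->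
     within P K2 s' (scan_post L2 V' stk' cur j2)) ->
  within P (K1 + K2) s (scan_post L2 V stk cur j2).
Proof.
move=> scan1 scan2; apply: within_seq scan1 _ => s1 [found1|[V1 [stk1 [state1 le1]]]].
  by apply: within_done; left.
apply: within_mono (scan2 _ _ _ state1) => s2 [found2|[V2 [stk2 [state2 le2]]]].
  by left.
by right; exists V2, stk2; split => //; apply: leq_trans le1.
Qed.

Lemma scan_ok V stk cur s :
  scan_state 42 V stk cur 0 s -> within P (22 + 22 + 22 + 22) s (scan_post 114 V stk cur 4).
Proof.
move=> state42.
apply: scan_post_seq => [|? ? ?]; last exact: scan_W_ok.
apply: scan_post_seq => [|? ? ?]; last exact: scan_E_ok.
apply: scan_post_seq => [|? ? ?]; last exact: scan_S_ok.
exact: scan_N_ok.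
Qed.

Definition loop_inv V stk s :=
  [/\ pc s = 36, const_regs (regs s), regs s 3 = top + 2 * size stk, mem_ok V stk (Defs.mem s) &
      [/\ search_inv V stk & closed V stk]].

Definition correct_halt s :=
  halted P s /\ (regs s 0 = 1 <-> exists2 t, C t.1 t.2 & walk t target).

Lemma no_walk V :
  search_inv V [::] -> closed V [::] -> ~ exists2 t, C t.1 t.2 & walk t target.
Proof.
move=> [_ inv_V _ Vt] closed_V [t Ct walk_t].
have walk_visited p q : walk p q -> q = target -> openp p -> p \in V.
  elim=> [r|r d r' Dd open_r _ IH] q_target open_p; first by rewrite q_target.
  rewrite -(opp_shiftK open_r); apply: closed_V => //; last by rewrite /back (opp_shiftK open_r).
  exact: IH.
have [_ code_t _] := inv_V _ (walk_visited _ _ walk_t erefl (valid_C Ct)).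
by case: (codeP t) => [[]|[_ [_ /negP]]|[]]; rewrite ?code_t.
Qed.

Lemma pop_mem V stk p M : mem_ok V (rcons stk p) M -> mem_ok V stk M.
Proof.
move=> [mem_board mem_stk]; split => // i lt_i.
by have := mem_stk i; rewrite size_rcons nth_rcons lt_i; apply; lia.
Qed.

Lemma found_correct s : found s -> correct_halt s.
Proof. by case=> halted_s out1 walk_t; split => //; rewrite out1. Qed.

Lemma pop_ok V stk p s :
  loop_inv V (rcons stk p) s -> within P 6 s (scan_state 42 V stk p 0).
Proof.
case: s => pc R M [/= -> [R1 R2 R10 R11 [R13 R14 R15]] R3 mem_s [inv_V closed_V]].
have nonempty : (top + 2 * size (rcons stk p) - top == 0) = false.
  by rewrite size_rcons; apply/eqnP; lia.
have [mem_board mem_stk] := mem_s.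
have lt_size : size stk < size (rcons stk p) by rewrite size_rcons.
have [M_addr M_y] := mem_stk _ lt_size.
rewrite nth_rcons ltnn eqxx in M_addr M_y.
have M_y' : M (top + 2 * size (rcons stk p) - 1) = p.2.
  by rewrite size_rcons -M_y; congr M; lia.
have M_addr' : M (top + 2 * size (rcons stk p) - 1 - 1) = addr p.
  by rewrite size_rcons -M_addr; congr M; lia.
clear M_addr M_y.
have inv_stk : search_inv V stk.
  case: inv_V => ? ? sub_V ?; split => // x stk_x.
  by apply: sub_V; rewrite mem_rcons inE stk_x orbT.
have Vp : p \in V by case: inv_V => _ _ sub_V _; apply: sub_V; rewrite mem_rcons inE eqxx.
do 6 exec; apply: within_done; apply: mk_scan_state => //; try (by simpl; rewrite_regs).
- by rewrite /= size_rcons; lia.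
- exact: pop_mem mem_s.
- exact: closed_upto_pop.
Qed.

Lemma loop_ok k V stk s :
  potential V stk < k -> loop_inv V stk s -> within P (100 * k) s correct_halt.
Proof.
elim: k V stk s => [|k IH] V stk s //.
case/lastP: stk => [|stk p] lt_k inv_s.
  case: s inv_s => pc R M [/= -> [R1 R2 R10 R11 [R13 R14 R15]] R3 _ [inv_V closed_V]].
  have empty : (top + 2 * 0 - top == 0) = true by rewrite muln0 addn0 subnn.
  apply: within_le (_ : 3 <= _) _; first lia.
  do 3 exec; apply: within_done; split => //; split => // /(no_walk inv_V closed_V) [].
apply: (@within_le _ (6 + ((22 + 22 + 22 + 22) + (100 * k).+1))); first lia.
apply: within_seq (pop_ok inv_s) _ => s1 /scan_ok scan1.
apply: within_seq scan1 _ => s2 [/found_correct|[V2 [stk2 [state2 le2]]]].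
  exact: within_done.
case: s2 state2 => pc R M [/= -> const_R R3 _ [_ mem_M inv_V2 _ closed_V2]].
apply: within_step; first by [].
apply: (IH V2 stk2).
  by move: le2 lt_k; rewrite /potential size_rcons; lia.
by split => //; split => //; apply: closed_upto_all closed_V2.
Qed.

Lemma setup_ok :
  within P (7 + ((4 * m + 1) + (7 + ((4 * (ex - 1) + 1) + 4)))) (State 0 (fun _ => 0) M0)
    (fun s => [/\ pc s = 26, const_regs (regs s), regs s 3 = top, regs s 4 = addr target
                & regs s 5 = target.2 /\ Defs.mem s = M0]).
Proof.
have [x1 xm y1 yn] := @inbP _ _ target in_target.
do 7 exec.
apply: within_seq; first by apply: (@countdown_loop P 7 2 m).
case=> pc1 R1 M1 [/= -> -> top_R1 R1_other].
do 7 exec.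
apply: within_seq; first by apply: (@countdown_loop P 18 4 (ex - 1)) => //=; rewrite ?R1_other.
case=> pc2 R2 M2 [/= -> -> addr_R2 R2_other].
have R2_1 : R2 1 = n by rewrite R2_other //= R1_other.
have R2_2 : R2 2 = top by rewrite R2_other //= top_R1.
have R2_10 : R2 10 = 1 by rewrite R2_other //= R1_other.
have R2_15 : R2 15 = 0 by rewrite R2_other //= R1_other.
have R2_5 : R2 5 = ey by rewrite R2_other.
do 4 exec; apply: within_done; split => //=; first by rewrite addn0.
have [M0_1 M0_3] : M0 1 = n /\ M0 3 = ey by [].
rewrite addr_R2 R1_other //= M0_1 M0_3 /addr /=; move: y1 => /= y1.
by move: ((ex - 1) * n) => X; lia.
Qed.

Lemma run_ok :
  within P (7 + ((4 * m + 1) + (7 + ((4 * (ex - 1) + 1) + 4))) + (9 + 100 * (2 * (m * n))))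
    (State 0 (fun _ => 0) M0) correct_halt.
Proof.
apply: within_seq setup_ok _ => -[pc R M] [/= -> [R1 R2 R10 R11 [R13 R14 R15]] R3 R4 [R5 ->]].
have M0_target : M0 (addr target) = code target by apply: input_mem_addr.
case: (codeP target) => [[code_t blocked_t]|[code_t [open_t empty_t]]|[code_t [_ Ct]]].
- apply: within_le (_ : 3 <= _) _; first lia.
  do 3 exec; apply: within_done; split => //; split => // -[t Ct walk_t].
  have [t_target|open_target] := walk_end walk_t; last by rewrite open_target in blocked_t.
  by move: blocked_t; rewrite -t_target /openp (valid_C Ct).
- apply: within_le (_ : 9 + 100 * (2 * (m * n)) <= _) _; first lia.
  do 9 exec; apply: (@loop_ok _ [:: target] [:: target]).
    by have := muln_gt0 m n; rewrite m_pos n_pos /potential /=; lia.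
  split => //=; first by lia.
  + have mem_empty : mem_ok [::] [::] M0 by split => // a _.
    by have := @push_mem [::] [::] M0 target mem_empty in_target; rewrite /= muln0 addn0.
  + split; last by move=> p d; rewrite inE => ->.
    split => //=; rewrite ?inE ?eqxx //.
    by move=> p; rewrite inE => /eqP ->; split => //; apply: walk_refl.
- apply: within_le (_ : 6 <= _) _; first lia.
  do 6 exec; apply: within_done; apply: found_correct.
  by split => //; exists target => //; apply: walk_refl.
Qed.
End Main.

Theorem theorem1 (D : dir -> bool) :
  exists (prog : seq instr) (c : nat),
  forall (m n : nat) (op C : nat -> nat -> bool) (ex ey : nat),
    valid_config m n op C ->
    in_board m n ex ey ->
    exists o : nat,
      halts_within prog (c * (m * n) + c) (input_mem m n op C ex ey) o /\
      (o = 1 <-> occupiable m n op D C ex ey).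
Proof.
exists (prog D), 300 => m n op C ex ey valid_C in_e.
have [k le_k [halted_k output_k]] := run_ok D valid_C in_e.
exists (regs (run (prog D) k (State 0 (fun _ => 0) (input_mem m n op C ex ey))) 0).
split; last by rewrite output_k occupiable_walkP.
exists k; split => //.
have m_le_mn : m <= m * n by rewrite leq_pmulr // (n_pos in_e).
have : ex <= m by move: in_e; rewrite /in_board; lia.
by move: le_k m_le_mn; move: (m * n) => mn; lia.
Qed.
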